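(* Let $\mathcal S$ be a set of density matrices on finite-dimensional Hilbert spaces that is closed under tensor products and under permutations of tensor factors, and let $f$ be a real-valued function on pairs $(\rho,\sigma)$ with $\sigma\in\mathcal S$ and $\rho$ a density matrix on $\mathcal H_\sigma$, which is locally monotonic with respect to $\mathcal S$. Then $f(\rho,\sigma)\ge f(C[\rho],\sigma)$ for every $\sigma\in\mathcal S$, every density matrix $\rho$ on $\mathcal H_\sigma$ and every $C\in\mathcal C_\sigma$, and the same holds for $f'(\rho,\sigma):=f(\rho,\sigma)-f(\sigma,\sigma)$.
   Context: For $\sigma\in\mathcal S$, $\mathcal H_\sigma$ is the Hilbert space on which $\sigma$ acts and $\mathcal C_\sigma$ is the set of quantum channels $C$ on $\mathcal H_\sigma$ with $C[\sigma]=\sigma$. Closure under permutations means $\sigma\otimes\sigma'\in\mathcal S\Rightarrow\sigma'\otimes\sigma\in\mathcal S$. $f$ is locally monotonic with respect to $\mathcal S$ if for all $\sigma_1,\sigma_2\in\mathcal S$, all $C\in\mathcal C_{\sigma_1\otimes\sigma_2}$ and all density matrices $\rho_i$ on $\mathcal H_{\sigma_i}$: $f(\rho_1,\sigma_1)+f(\rho_2,\sigma_2)\ge f(\rho'_1,\sigma_1)+f(\rho'_2,\sigma_2)$, where $\rho'_1=\mathrm{Tr}_2[C(\rho_1\otimes\rho_2)]$, $\rho'_2=\mathrm{Tr}_1[C(\rho_1\otimes\rho_2)]$. *)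

From HB Require Import structures.
From mathcomp Require Import all_boot all_order all_algebra.
From mathcomp Require Export complex mxtens.
Set Implicit Arguments. Unset Strict Implicit. Unset Printing Implicit Defensive.
Import Order.TTheory GRing.Theory Num.Theory.
Local Open Scope ring_scope.

Section Quantum.
Variable R : rcfType.
Local Notation C := (R[i]).

Definition psd n (A : 'M[C]_n) : Prop :=
  forall v : 'rV[C]_n, 0 <= (v *m A *m map_mx Num.conj (v^T)) 0 0.

Definition density n (A : 'M[C]_n) : Prop := psd A /\ \tr A = 1.

(* block (i,j) of a matrix on C^k (x) C^n (index (i,a) |-> i*n+a, as in tensmx) *)
Definition blockmx k n (X : 'M[C]_(k * n)) (i j : 'I_k) : 'M[C]_n :=
  \matrix_(a, b) X (mxtens_index (i, a)) (mxtens_index (j, b)).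

Definition ampliate k n (Phi : 'M[C]_n -> 'M[C]_n) (X : 'M[C]_(k * n)) : 'M[C]_(k * n) :=
  \sum_(i < k) \sum_(j < k) (delta_mx i j : 'M[C]_k) *t Phi (blockmx X i j).

Definition linear_map n (Phi : 'M[C]_n -> 'M[C]_n) : Prop :=
  forall (a : C) (X Y : 'M[C]_n), Phi (a *: X + Y) = a *: Phi X + Phi Y.

Definition completely_positive n (Phi : 'M[C]_n -> 'M[C]_n) : Prop :=
  forall k (X : 'M[C]_(k * n)), psd X -> psd (ampliate Phi X).

Definition trace_preserving n (Phi : 'M[C]_n -> 'M[C]_n) : Prop :=
  forall X : 'M[C]_n, \tr (Phi X) = \tr X.

Definition channel n (Phi : 'M[C]_n -> 'M[C]_n) : Prop :=
  [/\ linear_map Phi, completely_positive Phi & trace_preserving Phi].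

Definition ptrace2 n1 n2 (Y : 'M[C]_(n1 * n2)) : 'M[C]_n1 :=
  \matrix_(i, j) \sum_(a < n2) Y (mxtens_index (i, a)) (mxtens_index (j, a)).
Definition ptrace1 n1 n2 (Y : 'M[C]_(n1 * n2)) : 'M[C]_n2 :=
  \matrix_(a, b) \sum_(i < n1) Y (mxtens_index (i, a)) (mxtens_index (i, b)).

Definition state_family (S : forall n, 'M[C]_n -> Prop) : Prop :=
  [/\ (forall n (s : 'M[C]_n), S n s -> density s),
      (forall n m (s : 'M[C]_n) (s' : 'M[C]_m), S n s -> S m s' -> S (n * m)%N (s *t s'))
    & (forall n m (s : 'M[C]_n) (s' : 'M[C]_m), S (n * m)%N (s *t s') -> S (m * n)%N (s' *t s))].

Definition locally_monotonic (S : forall n, 'M[C]_n -> Prop)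
    (f : forall n, 'M[C]_n -> 'M[C]_n -> R) : Prop :=
  forall n1 n2 (s1 : 'M[C]_n1) (s2 : 'M[C]_n2), S n1 s1 -> S n2 s2 ->
  forall Phi : 'M[C]_(n1 * n2) -> 'M[C]_(n1 * n2),
    channel Phi -> Phi (s1 *t s2) = s1 *t s2 ->
  forall (r1 : 'M[C]_n1) (r2 : 'M[C]_n2), density r1 -> density r2 ->
    f _ (ptrace2 (Phi (r1 *t r2))) s1 + f _ (ptrace1 (Phi (r1 *t r2))) s2
    <= f _ r1 s1 + f _ r2 s2.

End Quantum.

From HB Require Import structures.
From mathcomp Require Import all_boot all_order all_algebra.
From mathcomp Require Import complex mxtens.
Import Order.TTheory GRing.Theory Num.Theory.
Local Open Scope ring_scope.
Set Implicit Arguments. Unset Strict Implicit.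

(* Apply local monotonicity to the pair (sigma, sigma) and the channel
   C (x) id, which fixes sigma (x) sigma, on the input rho (x) sigma.  The
   output is C[rho] (x) sigma, whose marginals are C[rho] and sigma, so the
   term f(sigma, sigma) occurs on both sides and cancels.  The statement for
   f' differs only by that same constant. *)

Lemma sum_mxtens_index (V : nmodType) n m (F : 'I_(n * m) -> V) :
  \sum_(k < n * m) F k = \sum_(a < n) \sum_(c < m) F (mxtens_index (a, c)).
Proof.
rewrite pair_big /=; apply: reindex.
exists (@mxtens_unindex n m) => k _; last exact: mxtens_unindexK.
by case: k => a c; rewrite mxtens_indexK.
Qed.

Section Channels.
Variable R : rcfType.
Local Notation C := (R[i]).

Lemma psd_congr m n (P : 'M[C]_(m, n)) (X : 'M[C]_n) :
  psd X -> psd (P *m X *m map_mx Num.conj P^T).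
Proof.
move=> psdX v; have := psdX (v *m P).
by rewrite trmx_mul map_mxM !mulmxA.
Qed.

Definition relabelmx m n (g : 'I_m -> 'I_n) (X : 'M[C]_n) : 'M[C]_m :=
  \matrix_(p, q) X (g p) (g q).

Lemma psd_relabelmx m n (g : 'I_m -> 'I_n) (X : 'M[C]_n) :
  psd X -> psd (relabelmx g X).
Proof.
pose P : 'M[C]_(m, n) := \matrix_(p, j) (g p == j)%:R.
have P_real : map_mx Num.conj P^T = P^T.
  by apply/matrixP => i j; rewrite !mxE conjC_nat.
have -> : relabelmx g X = P *m X *m P^T.
  apply/matrixP => p q; rewrite !mxE (bigD1 (g q)) //= big1 ?addr0.
    rewrite !mxE eqxx mulr1 (bigD1 (g p)) //= big1 ?addr0.
      by rewrite !mxE eqxx mul1r.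
    by move=> j /negbTE gpj; rewrite !mxE eq_sym gpj mul0r.
  by move=> j /negbTE gqj; rewrite !mxE eq_sym gqj mulr0.
by rewrite -P_real; apply: psd_congr.
Qed.

Lemma linear_map0 n (Phi : 'M[C]_n -> 'M[C]_n) : linear_map Phi -> Phi 0 = 0.
Proof.
move=> linPhi; have := linPhi 1 0 0; rewrite !scale1r addr0 => Phi0.
by apply: (addrI (Phi 0)); rewrite addr0 -Phi0.
Qed.

Lemma linear_mapZ n (Phi : 'M[C]_n -> 'M[C]_n) : linear_map Phi ->
  forall a X, Phi (a *: X) = a *: Phi X.
Proof.
by move=> linPhi a X; have := linPhi a X 0; rewrite (linear_map0 linPhi) !addr0.
Qed.

Lemma ampliateE k n (Phi : 'M[C]_n -> 'M[C]_n) (X : 'M[C]_(k * n)) i j a b :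
  ampliate Phi X (mxtens_index (i, a)) (mxtens_index (j, b)) =
  Phi (blockmx X i j) a b.
Proof.
rewrite /ampliate summxE (bigD1 i) //= summxE (bigD1 j) //= tensmxE mxE.
rewrite !eqxx mul1r big1 ?addr0 => [|j' /negbTE jj']; last first.
  by rewrite tensmxE mxE eqxx eq_sym jj' mul0r.
rewrite big1 ?addr0 // => i' /negbTE ii'; rewrite summxE big1 // => j' _.
by rewrite tensmxE mxE eq_sym ii' mul0r.
Qed.

Lemma ptrace2_tens n m (A : 'M[C]_n) (B : 'M[C]_m) :
  ptrace2 (A *t B) = \tr B *: A.
Proof.
apply/matrixP => i j; rewrite !mxE /mxtrace mulr_suml.
by apply: eq_bigr => a _; rewrite tensmxE mulrC.
Qed.

Lemma ptrace1_tens n m (A : 'M[C]_n) (B : 'M[C]_m) :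
  ptrace1 (A *t B) = \tr A *: B.
Proof.
apply/matrixP => i j; rewrite !mxE /mxtrace mulr_suml.
by apply: eq_bigr => a _; rewrite tensmxE.
Qed.

Section TensId.
Variables n m : nat.
Variable Phi : 'M[C]_n -> 'M[C]_n.

Definition rblockmx (Y : 'M[C]_(n * m)) (c d : 'I_m) : 'M[C]_n :=
  \matrix_(a, b) Y (mxtens_index (a, c)) (mxtens_index (b, d)).

Definition tensid_map (Y : 'M[C]_(n * m)) : 'M[C]_(n * m) :=
  \matrix_(p, q) Phi (rblockmx Y (mxtens_unindex p).2 (mxtens_unindex q).2)
                     (mxtens_unindex p).1 (mxtens_unindex q).1.

Lemma tensid_mapE Y a b c d :
  tensid_map Y (mxtens_index (a, c)) (mxtens_index (b, d)) =
  Phi (rblockmx Y c d) a b.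
Proof. by rewrite mxE !mxtens_indexK. Qed.

Lemma tensid_map_tens (A : 'M[C]_n) (B : 'M[C]_m) :
  linear_map Phi -> tensid_map (A *t B) = Phi A *t B.
Proof.
move=> linPhi; apply/matrixP => p q.
case: p / (mxtens_indexP p) => a c; case: q / (mxtens_indexP q) => b d.
rewrite tensid_mapE tensmxE.
have -> : rblockmx (A *t B) c d = B c d *: A.
  by apply/matrixP => i j; rewrite !mxE !mxtens_indexK mulrC.
by rewrite linear_mapZ // mxE mulrC.
Qed.

Lemma linear_tensid_map : linear_map Phi -> linear_map tensid_map.
Proof.
move=> linPhi a X Y; apply/matrixP => p q.
case: p / (mxtens_indexP p) => a1 c; case: q / (mxtens_indexP q) => b1 d.
rewrite tensid_mapE.
have -> : rblockmx (a *: X + Y) c d = a *: rblockmx X c d + rblockmx Y c d.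
  by apply/matrixP => i j; rewrite !mxE.
by rewrite linPhi !mxE !mxtens_indexK.
Qed.

(* id_k (x) (Phi (x) id_m) is id_(k m) (x) Phi, after reordering the tensor
   factors C^k (x) C^n (x) C^m as (C^k (x) C^m) (x) C^n. *)
Lemma ampliate_tensid_map k (X : 'M[C]_(k * (n * m))) :
  let sig (P : 'I_(k * m * n)) :=
    mxtens_index ((mxtens_unindex (mxtens_unindex P).1).1,
      mxtens_index ((mxtens_unindex P).2, (mxtens_unindex (mxtens_unindex P).1).2)) in
  let tau (P : 'I_(k * (n * m))) :=
    mxtens_index (mxtens_index ((mxtens_unindex P).1,
        (mxtens_unindex (mxtens_unindex P).2).2),
      (mxtens_unindex (mxtens_unindex P).2).1) in
  ampliate tensid_map X = relabelmx tau (ampliate Phi (relabelmx sig X)).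
Proof.
move=> sig tau; apply/matrixP => P Q.
case: P / (mxtens_indexP P) => i p; case: p / (mxtens_indexP p) => a c.
case: Q / (mxtens_indexP Q) => j q; case: q / (mxtens_indexP q) => b d.
rewrite ampliateE tensid_mapE mxE /tau !mxtens_indexK /= ampliateE.
congr (Phi _ a b); apply/matrixP => a' b'.
by rewrite !mxE /sig !mxtens_indexK.
Qed.

Lemma cp_tensid_map : completely_positive Phi -> completely_positive tensid_map.
Proof.
move=> cpPhi k X psdX; rewrite ampliate_tensid_map.
exact/psd_relabelmx/cpPhi/psd_relabelmx.
Qed.

Lemma tp_tensid_map : trace_preserving Phi -> trace_preserving tensid_map.
Proof.
move=> tpPhi Y; rewrite /mxtrace !sum_mxtens_index.
under eq_bigr do under eq_bigr do rewrite tensid_mapE.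
rewrite exchange_big [RHS]exchange_big; apply: eq_bigr => c _ /=.
have := tpPhi (rblockmx Y c c); rewrite /mxtrace => ->.
by apply: eq_bigr => a _; rewrite mxE.
Qed.

Lemma channel_tensid_map : channel Phi -> channel tensid_map.
Proof.
case=> linPhi cpPhi tpPhi; split.
- exact: linear_tensid_map.
- exact: cp_tensid_map.
- exact: tp_tensid_map.
Qed.

End TensId.

End Channels.

Theorem lemma35 (R : rcfType) (S : forall n, 'M[R[i]]_n -> Prop)
    (f : forall n, 'M[R[i]]_n -> 'M[R[i]]_n -> R) :
  state_family S -> locally_monotonic S f ->
  forall n (s : 'M[R[i]]_n), S n s ->
  forall rho : 'M[R[i]]_n, density rho ->
  forall Phi : 'M[R[i]]_n -> 'M[R[i]]_n, channel Phi -> Phi s = s ->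
    f n (Phi rho) s <= f n rho s /\
    f n (Phi rho) s - f n s s <= f n rho s - f n s s.
Proof.
move=> [S_density _ _] mono n s Ss rho rho_density Phi Phi_channel Phi_s.
have s_density := S_density _ _ Ss.
have [linPhi _ tpPhi] := Phi_channel.
have fixes_ss : tensid_map Phi (s *t s) = s *t s.
  by rewrite tensid_map_tens // Phi_s.
have := mono n n s s Ss Ss _ (channel_tensid_map n Phi_channel) fixes_ss
  rho s rho_density s_density.
rewrite tensid_map_tens // ptrace2_tens ptrace1_tens tpPhi.
case: rho_density => _ ->; case: s_density => _ ->.
rewrite !scale1r lerD2r => mono_rho.
by split; rewrite ?lerD2r.
Qed.
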